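(* Let $\mathbf P$ be a CFSM protocol with the recognizable channel property and communication graph $(N,E)$. A global state $(S',C')$ is not reachable if and only if there is a family of recognizable relations $\mathbf R(S)\subseteq\prod_{\xi\in E}M_\xi^*$, $S\in\prod_{j\in N}K_j$, consistent with respect to $\mathbf P$, such that $C^0\in\mathbf R(S^0)$ and $C'\notin\mathbf R(S')$.
   Context: A CFSM protocol $\mathbf P$ has a finite directed communication graph $G=(N,E)$ (edge $\xi$ has tail $-\xi$, head $+\xi$), pairwise disjoint finite message sets $M_\xi$, and for each $j\in N$ a finite state machine $F_j=(K_j,\Sigma_j,T_j,h_j)$: finite state set $K_j$, initial state $h_j$, alphabet $\Sigma_j=\{+b: b\in M_\xi,\ j=+\xi\}\cup\{-b: b\in M_\xi,\ j=-\xi\}$, transitions $T_j\subseteq K_j\times\Sigma_j\times K_j$ ($+b$ = receive, $-b$ = send). A composite state is $S=(p_j:j\in N)$; a channel content is $C=(x_\xi:\xi\in E)$, $x_\xi\in M_\xi^*$; global states are pairs $(S,C)$; $C^0$ has all components empty; $S^0=(h_j:j\in N)$; $(S^0,C^0)$ is the initial global state. A step: some machine $F_i$ takes $p_i\xrightarrow{-b}q_i$ with $b\in M_\beta$, $i=-\beta$, appending $b$ to the end of $x_\beta$; or takes $p_i\xrightarrow{+b}q_i$ with $b\in M_\beta$, $i=+\beta$, provided $x_\beta$ begins with $b$, removing it; all else unchanged. $\vdash^*$ means reachability by finitely many steps; reachable means $(S^0,C^0)\vdash^*$ it. A relation in $\prod_{\xi\in E}M_\xi^*$ is recognizable if it is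 a finite union of sets $\prod_\xi L_\xi$ with $L_\xi\subseteq M_\xi^*$ regular. $\mathbf P$ has the recognizable channel property if $\mathbf L(S)=\{C:(S^0,C^0)\vdash^*(S,C)\}$ is recognizable for every $S$. A family $\mathbf R(S)$ is consistent if $(S,C)\vdash^*(S',C')$ and $C\in\mathbf R(S)$ imply $C'\in\mathbf R(S')$. *)

From mathcomp Require Import all_boot.
Set Implicit Arguments. Unset Strict Implicit. Unset Printing Implicit Defensive.

Definition regular (A : finType) (L : seq A -> Prop) : Prop :=
  exists (Q : finType) (q0 : Q) (d : Q -> A -> Q) (F : pred Q),
    forall w, L w <-> F (foldl d q0 w).

Inductive dir := Snd | Rcv.

Record protocol := Protocol {
  node : finType;
  edge : finType;
  tl : edge -> node;
  hd : edge -> node;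
  msg : edge -> finType;                   (* M_xi; tagging by xi makes them disjoint *)
  kst : node -> finType;
  kinit : forall j, kst j;
  trans : forall j, kst j -> dir -> {xi : edge & msg xi} -> kst j -> bool;
  trans_snd : forall j p xb q, @trans j p Snd xb q -> tl (tag xb) = j;
  trans_rcv : forall j p xb q, @trans j p Rcv xb q -> hd (tag xb) = j
}.

Section Semantics.
Variable P : protocol.

Definition cstate := forall j : node P, kst j.
Definition chan := forall xi : edge P, seq (msg xi).

Definition S0 : cstate := fun j => kinit j.
Definition C0 : chan := fun xi => [::].

Definition step (S : cstate) (C : chan) (S' : cstate) (C' : chan) : Prop :=
  exists (i : node P) (q : kst i) (beta : edge P) (b : msg beta),
    (forall k, k <> i -> S' k = S k) /\ S' i = q /\
    (forall xi, xi <> beta -> C' xi = C xi) /\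
    ( (trans (S i) Snd (Tagged (fun x => msg x) b) q /\ i = tl beta /\
        C' beta = rcons (C beta) b)
   \/ (trans (S i) Rcv (Tagged (fun x => msg x) b) q /\ i = hd beta /\
        C beta = b :: C' beta) ).

Inductive reach : cstate -> chan -> cstate -> chan -> Prop :=
| reach_refl S C : reach S C S C
| reach_step S C S1 C1 S2 C2 : reach S C S1 C1 -> step S1 C1 S2 C2 -> reach S C S2 C2.

Definition reachable (S : cstate) (C : chan) : Prop := reach S0 C0 S C.

Definition recognizable (R : chan -> Prop) : Prop :=
  exists (n : nat) (L : 'I_n -> forall xi : edge P, seq (msg xi) -> Prop),
    (forall i xi, regular (L i xi)) /\
    (forall C, R C <-> exists i, forall xi, L i xi (C xi)).

Definition Lreach (S : cstate) : chan -> Prop := fun C => reachable S C.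

Definition recognizable_channel_property : Prop :=
  forall S, recognizable (Lreach S).

Definition consistent (R : cstate -> chan -> Prop) : Prop :=
  forall S C S' C', reach S C S' C' -> R S C -> R S' C'.

End Semantics.

From mathcomp Require Import all_boot.

(* The reachability sets L(S) form the least consistent family containing C0
   in L(S0), and they are recognizable by hypothesis: so an unreachable C' is
   excluded by L itself, and excluded by every consistent family only if it is
   unreachable. *)

Section Reachability.
Variable P : protocol.

Lemma reach_trans (S1 S2 S3 : cstate P) (C1 C2 C3 : chan P) :
  reach S1 C1 S2 C2 -> reach S2 C2 S3 C3 -> reach S1 C1 S3 C3.
Proof.
move=> r12 r23; elim: r23 r12 => // S C Sa Ca Sb Cb _ IH st r12.
exact: reach_step (IH r12) st.
Qed.

Lemma reachable_S0C0 : reachable (@S0 P) (@C0 P).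
Proof. exact: reach_refl. Qed.

Lemma consistent_Lreach : consistent (@Lreach P).
Proof. by move=> S C S2 C2 r rS; apply: reach_trans r. Qed.

Lemma consistent_reachable (R : cstate P -> chan P -> Prop)
    (S : cstate P) (C : chan P) :
  consistent R -> R (@S0 P) (@C0 P) -> reachable S C -> R S C.
Proof. by move=> cR R0 r; apply: cR r R0. Qed.

End Reachability.

Theorem theorem9p5 (P : protocol) (HP : recognizable_channel_property P)
    (S' : cstate P) (C' : chan P) :
  ~ reachable S' C' <->
  exists R : cstate P -> chan P -> Prop,
    (forall S, recognizable (R S)) /\ consistent R /\
    R (@S0 P) (@C0 P) /\ ~ R S' C'.
Proof.
split.
- move=> unreach; exists (@Lreach P).
  split; first exact: HP.
  split; first exact: consistent_Lreach.
  by split; first exact: reachable_S0C0.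
- move=> [R [_ [cR [R0 notR']]]] r'.
  by apply: notR'; apply: consistent_reachable r'.
Qed.
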